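(* Let $L,n$ be positive integers and $B\in\mathcal M(L,n)$. Then for all $1\le i\le L-1$ and $1\le j\le n-1$, \[e_i^{\downarrow}(e_j^{\leftarrow}(B))=e_j^{\leftarrow}(e_i^{\downarrow}(B)).\]
   Context: $\mathcal M(L,n)$ is the set of tuples $B=(B_1,\dots,B_L)$ of subsets of $[n]$, viewed as $L\times n$ grids with rows $1..L$ bottom to top and columns $1..n$ left to right, a ball in $(r,j)$ iff $j\in B_r$. $\mathrm{cw}(B)$ scans columns left to right, each top to bottom, recording row numbers of balls. For a word $w$ and $i\ge1$, $\mathrm{Par}_i(w)$ writes ''('' for each letter $i+1$ and '')'' for each letter $i$, left to right, and iteratively matches a ''('' with a '')'' to its right when adjacent or separated only by matched parentheses. $e_i^\star(B)$ moves every ball of row $i+1$ whose letter in $\mathrm{cw}(B)$ is unmatched in $\mathrm{Par}_i(\mathrm{cw}(B))$ down to row $i$ in the same column. The rotation $\mathrm{rot}:\mathcal M(L,n)\to\mathcal M(n,L)$ is the $90^\circ$ counterclockwise rotation: the ball in cell $(r,c)$ (row $r$, column $c$) goes to cell $(c,L+1-r)$. Define $e_i^{\downarrow}=e_i^\star$ on $\mathcal M(L,n)$ and $e_j^{\leftarrow}=\mathrm{rot}^{-1}\circ e_j^\star\circ\mathrm{rot}$ (with $e_j^\star$ acting on $\mathcal M(n,L)$). *)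

From mathcomp Require Import all_boot all_order.
Set Implicit Arguments. Unset Strict Implicit. Unset Printing Implicit Defensive.

(* A grid B in M(L,n): row r (paper row r, 1 <= r <= L) is the ordinal r-1 : 'I_L,
   column c (paper column c, 1 <= c <= n) is the ordinal c-1 : 'I_n.
   B r is the set of columns containing a ball in that row. *)
Definition grid (L n : nat) := {ffun 'I_L -> {set 'I_n}}.

(* column reading word cw(B), recorded as the list of ball cells (row, column):
   columns left to right, each column top to bottom. The letter of a cell
   (r, c) is the paper row number val r + 1. *)
Definition cw (L n : nat) (B : grid L n) : seq ('I_L * 'I_n) :=
  flatten [seq [seq (r, c) | r <- rev (enum 'I_L) & c \in B r] | c <- enum 'I_n].

(* Bracketing Par_i (paper index i >= 1): a letter i+1 (ordinal row i) is "(",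
   a letter i (ordinal row i-1) is ")". Scanning left to right, each ")"
   matches the nearest preceding still-unmatched "(" (this is exactly the
   iterative matching of adjacent pairs).  [unm i s stk] returns the cells of
   the unmatched "(" letters (stk = currently unmatched "(" cells). *)
Fixpoint unm (L n : nat) (i : nat) (s stk : seq ('I_L * 'I_n)) : seq ('I_L * 'I_n) :=
  match s with
  | [::] => stk
  | x :: s' =>
      if val x.1 == i then unm i s' (x :: stk)
      else if val x.1 == i.-1 then unm i s' (behead stk)
      else unm i s' stk
  end.

Definition estar (L n : nat) (i : nat) (B : grid L n) : grid L n :=
  let U := unm i (cw B) [::] in
  let moved := [set c : 'I_n | has (fun x => x.2 == c) U] in
  [ffun r : 'I_L =>
     if val r == i.-1 then B r :|: moved
     else if val r == i then B r :\: moved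
     else B r].

(* rotation by 90 degrees counterclockwise: the ball in cell (r,c) (paper,
   1-indexed) goes to cell (c, L+1-r); 0-indexed: (r,c) |-> (c, rev_ord r). *)
Definition rot (L n : nat) (B : grid L n) : grid n L :=
  [ffun c : 'I_n => [set r' : 'I_L | c \in B (rev_ord r')]].

Definition rotinv (L n : nat) (C : grid n L) : grid L n :=
  [ffun r : 'I_L => [set c : 'I_n | rev_ord r \in C c]].

Definition edown (L n : nat) (i : nat) (B : grid L n) : grid L n := estar i B.
Definition eleft (L n : nat) (j : nat) (B : grid L n) : grid L n :=
  rotinv (estar j (rot B)).

From mathcomp Require Import all_boot zify.

(* e_i^down only reads rows i and i+1: read column by column, a
   column with a ball in row i+1 only is "(", one with a ball in row i only is
   ")", and the moved balls are the "(" left on the stack by the usual push/pop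
   scan.  Likewise e_j^left reads columns j and j+1 row by row from the top.
   The two windows cross in a 2x2 block.  Splitting the reading word at the
   block, the final stack is determined by the stacks of the prefix and of the
   suffix, which the other operator does not change, by what the block itself
   leaves, and by how many prefix entries the block and the suffix pop; the
   last two depend only on the block and on the number t of unmatched ")" after
   it.  So each operator acts on the block by a function of the block and t,
   and a finite check (t only matters up to 2) shows that these functions
   commute and that each preserves the pop count seen by the other. *)

Set Implicit Arguments. Unset Strict Implicit. Unset Printing Implicit Defensive.

Inductive bracket := Open | Close | Neutral.

Section OpenStack.
Variables (T : eqType) (lt : T -> bracket).

Definition push_pop (stk : seq T) (x : T) : seq T :=
  match lt x with Open => x :: stk | Close => behead stk | Neutral => stk end.

Definition open_stack (s stk : seq T) : seq T := foldl push_pop stk s.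

Fixpoint unmatched_closes (s : seq T) : nat :=
  if s is x :: s' then
    match lt x with
    | Open => (unmatched_closes s').-1
    | Close => (unmatched_closes s').+1
    | Neutral => unmatched_closes s'
    end
  else 0.

Lemma open_stack_cat s1 s2 stk :
  open_stack (s1 ++ s2) stk = open_stack s2 (open_stack s1 stk).
Proof. exact: foldl_cat. Qed.

Lemma open_stackE s stk :
  open_stack s stk = open_stack s [::] ++ drop (unmatched_closes s) stk.
Proof.
elim: s stk => [|x s IH] stk /=; first by rewrite drop0.
rewrite /push_pop; case: (lt x).
- rewrite IH [open_stack s [:: x]]IH -catA; congr (_ ++ _).
  by case: (unmatched_closes s) => [|k] /=; rewrite ?drop0.
- by rewrite IH; case: stk => [|y stk] //=; rewrite drop_nil.
- by rewrite IH.
Qed.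

Lemma open_stack_sub s stk : {subset open_stack s stk <= s ++ stk}.
Proof.
elim: s stk => [|y s IH] stk x //= /IH; rewrite mem_cat inE.
case/orP=> [x_s | ]; first by rewrite mem_cat x_s !orbT.
rewrite /push_pop mem_cat; case: (lt y) => /=.
- by rewrite inE => /orP[->|->]; rewrite ?orbT.
- by case: stk => //= z stk x_stk; rewrite inE x_stk !orbT.
- by move=> ->; rewrite !orbT.
Qed.

End OpenStack.

Lemma eq_in_open_stack (T : eqType) (lt1 lt2 : T -> bracket) s stk :
  {in s, lt1 =1 lt2} -> open_stack lt1 s stk = open_stack lt2 s stk.
Proof.
elim: s stk => [|y s IH] stk //= eq_lt.
rewrite /push_pop eq_lt ?mem_head //; apply: IH => z zs.
by apply: eq_lt; rewrite inE zs orbT.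
Qed.

Lemma eq_in_unmatched_closes (T : eqType) (lt1 lt2 : T -> bracket) s :
  {in s, lt1 =1 lt2} -> unmatched_closes lt1 s = unmatched_closes lt2 s.
Proof.
elim: s => [|y s IH] //= eq_lt.
rewrite eq_lt ?mem_head // IH // => z zs.
by apply: eq_lt; rewrite inE zs orbT.
Qed.

Lemma open_stack_map (T1 T2 : eqType) (f : T1 -> T2) (lt : T2 -> bracket) s stk :
  open_stack lt (map f s) (map f stk) = map f (open_stack (lt \o f) s stk).
Proof.
elim: s stk => [|x s IH] stk //=; rewrite -IH /push_pop /=.
by case: (lt (f x)); rewrite ?behead_map.
Qed.

Lemma mem_drop_catl (T : eqType) (x : T) t s1 s2 :
  x \notin s2 -> (x \in drop t (s1 ++ s2)) = (x \in drop t s1).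
Proof.
move=> x_s2; rewrite drop_cat; case: ltnP => [_|le_s1_t].
  by rewrite mem_cat (negPf x_s2) orbF.
by rewrite (negPf (contra (@mem_drop _ _ _ _) x_s2)) drop_oversize.
Qed.

Lemma mem_drop_catr (T : eqType) (x : T) t s1 s2 :
  x \notin s1 -> (x \in drop t (s1 ++ s2)) = (x \in drop (t - size s1) s2).
Proof.
move=> x_s1; rewrite drop_cat; case: ltnP => [lt_t_s1|//].
rewrite mem_cat (negPf (contra (@mem_drop _ _ _ _) x_s1)) /=.
have -> : t - size s1 = 0 by lia.
by rewrite drop0.
Qed.

Lemma uniq_window (T : eqType) (pre suf : seq T) x y :
  uniq (pre ++ [:: x; y] ++ suf) -> [/\ x != y, x \notin pre ++ suf & y \notin pre ++ suf].
Proof.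
rewrite cat_uniq /= !mem_cat !inE !negb_or => /and3P[_ /and3P[x_pre y_pre _]].
by case/and3P=> /andP[-> x_suf] y_suf _; rewrite x_pre y_pre x_suf y_suf.
Qed.

Lemma notin_window (T : eqType) (pre suf : seq T) x y z :
  uniq (pre ++ [:: x; y] ++ suf) -> z \in pre ++ suf -> z \notin [:: x; y].
Proof.
case/uniq_window=> _ x_out y_out z_in; rewrite !inE negb_or.
by apply/andP; split; apply: contraTneq z_in => ->.
Qed.

Definition pair_at (A : Type) (x y : A) (z : bool) : A := if z then y else x.

Definition pair_stack (x y : bracket) : seq bool :=
  open_stack (pair_at x y) [:: false; true] [::].

(* The number of entries of the incoming stack that are popped by a window with
   letters [x], [y] followed by a suffix with [t] unmatched closes. *)
Definition window_pops (x y : bracket) (t : nat) : nat :=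
  t - size (pair_stack x y) + unmatched_closes (pair_at x y) [:: false; true].

Section Window.
Variables (T : eqType) (lt : T -> bracket) (pre suf : seq T) (k k' : T).

Let window_stack :
  open_stack lt [:: k; k'] [::] = map (pair_at k k') (pair_stack (lt k) (lt k')).
Proof.
have -> : pair_stack (lt k) (lt k') = open_stack (lt \o pair_at k k') [:: false; true] [::].
  by apply: eq_in_open_stack => -[].
by rewrite -open_stack_map.
Qed.

Lemma mem_open_stack_out c : c \notin [:: k; k'] ->
  (c \in open_stack lt (pre ++ [:: k; k'] ++ suf) [::]) =
  (c \in open_stack lt suf [::]) ||
  (c \in drop (window_pops (lt k) (lt k') (unmatched_closes lt suf))
              (open_stack lt pre [::])).
Proof.
move=> c_out; rewrite !open_stack_cat open_stackE mem_cat; congr orb.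
rewrite [open_stack lt [:: k; k'] _]open_stackE mem_drop_catr; last first.
  by apply: contra c_out => /open_stack_sub; rewrite cats0.
by rewrite drop_drop window_stack size_map.
Qed.

Lemma mem_open_stack_window z : uniq (pre ++ [:: k; k'] ++ suf) ->
  (pair_at k k' z \in open_stack lt (pre ++ [:: k; k'] ++ suf) [::]) =
  (z \in drop (unmatched_closes lt suf) (pair_stack (lt k) (lt k'))).
Proof.
case/uniq_window=> kk' k_out k'_out.
have z_out : pair_at k k' z \notin pre ++ suf by case: z.
rewrite !open_stack_cat open_stackE mem_cat.
have -> : (pair_at k k' z \in open_stack lt suf [::]) = false.
  by apply: contraNF z_out => /open_stack_sub; rewrite cats0 mem_cat orbC => ->.
rewrite [open_stack lt [:: k; k'] _]open_stackE mem_drop_catl; last first.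
  by apply: contra z_out => /mem_drop /open_stack_sub; rewrite cats0 mem_cat => ->.
rewrite window_stack -map_drop mem_map //.
by move=> [] [] //= /eqP; rewrite ?(negPf kk') // eq_sym (negPf kk').
Qed.

End Window.

(* A cell pair with balls in both the lower and the upper cell reads "()",
   which is matched within the pair. *)
Definition ball_letter (lo up : bool) : bracket :=
  match lo, up with false, true => Open | true, false => Close | _, _ => Neutral end.

Record block :=
  Block { top_left : bool; top_right : bool; bot_left : bool; bot_right : bool }.

(* The action of e^down (rows a < b, reading the block columns l, r) and of
   e^left (columns l < r, reading the block rows b, a from the top) on the 2x2
   block, given the number [t] of unmatched closes after the block. *)
Definition block_down (t : nat) (B : block) : block :=
  let: Block p q s u := B in
  let moved := drop t (pair_stack (ball_letter s p) (ball_letter u q)) in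
  Block (p && (false \notin moved)) (q && (true \notin moved))
        (s || (false \in moved)) (u || (true \in moved)).

Definition block_left (t : nat) (B : block) : block :=
  let: Block p q s u := B in
  let moved := drop t (pair_stack (ball_letter p q) (ball_letter s u)) in
  Block (p || (false \in moved)) (q && (false \notin moved))
        (s || (true \in moved)) (u && (true \notin moved)).

Definition down_pops (t : nat) (B : block) : nat :=
  let: Block p q s u := B in window_pops (ball_letter s p) (ball_letter u q) t.

Definition left_pops (t : nat) (B : block) : nat :=
  let: Block p q s u := B in window_pops (ball_letter p q) (ball_letter s u) t.

Lemma block_down_leftC t t' B :
  block_down t (block_left t' B) = block_left t' (block_down t B).
Proof.
by case: B => [] [] [] [] []; case: t => [|[|t]]; case: t' => [|[|t']].
Qed.

Lemma down_pops_left t t' B : down_pops t (block_left t' B) = down_pops t B.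
Proof.
by case: B => [] [] [] [] []; case: t => [|[|t]]; case: t' => [|[|t']] => /=;
  rewrite /window_pops /=; lia.
Qed.

Lemma left_pops_down t t' B : left_pops t' (block_down t B) = left_pops t' B.
Proof.
by case: B => [] [] [] [] []; case: t => [|[|t]]; case: t' => [|[|t']] => /=;
  rewrite /window_pops /=; lia.
Qed.

Lemma enum_window m (x y : 'I_m) : val y = (val x).+1 ->
  enum 'I_m = take x (enum 'I_m) ++ [:: x; y] ++ drop y.+1 (enum 'I_m).
Proof.
move=> xy; have size_enum : size (enum 'I_m) = m by rewrite size_enum_ord.
rewrite -{1}(cat_take_drop x (enum 'I_m)); congr (_ ++ _).
rewrite (drop_nth x) ?size_enum ?ltn_ord // nth_ord_enum -xy.
by rewrite (drop_nth y) ?size_enum ?ltn_ord // nth_ord_enum.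
Qed.

Section Grid.
Variables (L n : nat).
Implicit Types (G : grid L n) (a b k : 'I_L) (l r c : 'I_n).

Definition rows_letter G a b c : bracket := ball_letter (c \in G a) (c \in G b).
Definition cols_letter G l r k : bracket := ball_letter (l \in G k) (r \in G k).

Definition down_moved G a b : seq 'I_n := open_stack (rows_letter G a b) (enum 'I_n) [::].
(* [map rev_ord (enum 'I_L)] lists the rows from top to bottom. *)
Definition left_moved G l r : seq 'I_L :=
  open_stack (cols_letter G l r) (map (@rev_ord L) (enum 'I_L)) [::].

Definition block_of G a b l r : block :=
  Block (l \in G b) (r \in G b) (l \in G a) (r \in G a).

Lemma unm_cat i (s1 s2 stk : seq ('I_L * 'I_n)) :
  unm i (s1 ++ s2) stk = unm i s2 (unm i s1 stk).
Proof.
by elim: s1 stk => [|x s1 IH] stk //=; case: ifP => _; [|case: ifP => _]; rewrite IH.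
Qed.

Lemma unm_skip i (s stk : seq ('I_L * 'I_n)) :
  all (fun x => (val x.1 != i) && (val x.1 != i.-1)) s -> unm i s stk = stk.
Proof.
by elim: s stk => [|x s IH] stk //= /andP[/andP[/negPf-> /negPf->] /IH].
Qed.

Lemma unm_column G a b c stk : val b = (val a).+1 ->
  map snd (unm (val b) [seq (k, c) | k <- rev (enum 'I_L) & c \in G k] stk) =
  push_pop (rows_letter G a b) (map snd stk) c.
Proof.
move=> ab; have pred_b : (val b).-1 = val a by rewrite ab.
have a_neq_b : (a == b) = false by apply/negbTE/eqP => a_b; move: ab; rewrite a_b; lia.
have b_neq_a : (b == a) = false by rewrite eq_sym.
have uniq_rows := enum_uniq 'I_L; rewrite (enum_window ab) in uniq_rows.
have [_ a_out b_out] := uniq_window uniq_rows.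
have skip s st : {subset s <= take a (enum 'I_L) ++ drop b.+1 (enum 'I_L)} ->
    unm (val b) [seq (k, c) | k <- s & c \in G k] st = st.
  move=> s_out; apply: unm_skip; apply/allP => x /mapP[k].
  rewrite mem_filter => /andP[_ /s_out k_out] -> /=.
  rewrite pred_b !(inj_eq val_inj); apply/andP.
  by split; apply: contraTneq k_out => ->.
rewrite (enum_window ab) !rev_cat -catA !filter_cat !map_cat !unm_cat.
rewrite (skip (rev (take a _))) => [|k]; last by rewrite mem_rev mem_cat => ->.
rewrite (skip (rev (drop b.+1 _))) => [|k]; last by rewrite mem_rev mem_cat orbC => ->.
rewrite /= /rows_letter /push_pop; case: (c \in G b); case: (c \in G a) => /=;
  by rewrite ?pred_b ?(inj_eq val_inj) ?eqxx ?a_neq_b ?b_neq_a ?behead_map.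
Qed.

Lemma unm_cw G a b : val b = (val a).+1 ->
  map snd (unm (val b) (cw G) [::]) = down_moved G a b.
Proof.
move=> ab; rewrite /cw /down_moved.
have unm_flatten s stk : map snd (unm (val b)
    (flatten [seq [seq (k, c) | k <- rev (enum 'I_L) & c \in G k] | c <- s]) stk) =
    open_stack (rows_letter G a b) s (map snd stk).
  elim: s stk => [|c s IH] stk //.
  by rewrite [flatten _]/= unm_cat IH (unm_column _ _ _ ab).
exact: unm_flatten.
Qed.

Lemma mem_estar a b (ab : val b = (val a).+1) G k c :
  (c \in estar (val b) G k) =
  if k == a then (c \in G a) || (c \in down_moved G a b)
  else if k == b then (c \in G b) && (c \notin down_moved G a b)
  else c \in G k.
Proof.
rewrite /estar ffunE.
have -> : (val k == (val b).-1) = (k == a) by rewrite ab (inj_eq val_inj).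
set M := [set _ | _].
have moved : (c \in M) = (c \in down_moved G a b).
  rewrite inE -(unm_cw G ab) -has_pred1 has_map.
  by apply: eq_has => x /=; rewrite eq_sym.
rewrite (inj_eq val_inj).
by case: eqP => [->|_]; [|case: eqP => [->|_]];
  rewrite ?(in_setU, in_setD) ?moved // andbC.
Qed.

End Grid.

Lemma left_moved_rot L n (G : grid L n) (l r : 'I_n) :
  map (@rev_ord L) (down_moved (rot G) l r) = left_moved G l r.
Proof.
rewrite /left_moved /down_moved (_ : [::] = map (@rev_ord L) [::]) // open_stack_map.
by congr map; apply: eq_in_open_stack => k _; rewrite /rows_letter !ffunE !inE.
Qed.

Lemma mem_eleft L n (l r : 'I_n) (lr : val r = (val l).+1) (G : grid L n) k c :
  (c \in eleft (val r) G k) =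
  if c == l then (c \in G k) || (k \in left_moved G l r)
  else if c == r then (c \in G k) && (k \notin left_moved G l r)
  else c \in G k.
Proof.
rewrite /eleft /rotinv ffunE inE (mem_estar lr).
have rotE c' : (rev_ord k \in rot G c') = (c' \in G k) by rewrite ffunE inE rev_ordK.
have movedE : (rev_ord k \in down_moved (rot G) l r) = (k \in left_moved G l r).
  by rewrite -left_moved_rot -{2}(rev_ordK k) (mem_map rev_ord_inj).
by case: eqP => [->|_]; [|case: eqP => [->|_]]; rewrite !rotE ?movedE.
Qed.

Section Commutation.
Variables (L n : nat) (a b : 'I_L) (l r : 'I_n).
Hypotheses (ab : val b = (val a).+1) (lr : val r = (val l).+1).
Variables (pre_c suf_c : seq 'I_n) (pre_r suf_r : seq 'I_L).
Hypothesis cols_window : enum 'I_n = pre_c ++ [:: l; r] ++ suf_c.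
Hypothesis rows_window : map (@rev_ord L) (enum 'I_L) = pre_r ++ [:: b; a] ++ suf_r.

Let uniq_cols : uniq (pre_c ++ [:: l; r] ++ suf_c).
Proof. by rewrite -cols_window enum_uniq. Qed.

Let uniq_rows : uniq (pre_r ++ [:: b; a] ++ suf_r).
Proof. by rewrite -rows_window (map_inj_uniq rev_ord_inj) enum_uniq. Qed.

Let b_neq_a : (b == a) = false.
Proof. by apply/negbTE/eqP => b_a; move: ab; rewrite b_a; lia. Qed.

Lemma block_estar (G : grid L n) :
  block_of (estar (val b) G) a b l r =
  block_down (unmatched_closes (rows_letter G a b) suf_c) (block_of G a b l r).
Proof.
rewrite /block_of !(mem_estar ab) !eqxx b_neq_a /down_moved cols_window.
by rewrite !(mem_open_stack_window _ false) // !(mem_open_stack_window _ true).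
Qed.

Lemma block_eleft (G : grid L n) :
  block_of (eleft (val r) G) a b l r =
  block_left (unmatched_closes (cols_letter G l r) suf_r) (block_of G a b l r).
Proof.
have [l_neq_r _ _] := uniq_window uniq_cols.
rewrite /block_of !(mem_eleft lr) !eqxx eq_sym (negPf l_neq_r) /left_moved rows_window.
by rewrite !(mem_open_stack_window _ false) // !(mem_open_stack_window _ true).
Qed.

Lemma rows_letter_eleft (G : grid L n) :
  {in pre_c ++ suf_c, rows_letter (eleft (val r) G) a b =1 rows_letter G a b}.
Proof.
move=> c /(notin_window uniq_cols); rewrite !inE negb_or => /andP[/negPf c_l /negPf c_r].
by rewrite /rows_letter !(mem_eleft lr) c_l c_r.
Qed.

Lemma cols_letter_estar (G : grid L n) :
  {in pre_r ++ suf_r, cols_letter (estar (val b) G) l r =1 cols_letter G l r}.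
Proof.
move=> k /(notin_window uniq_rows); rewrite !inE negb_or => /andP[/negPf k_b /negPf k_a].
by rewrite /cols_letter !(mem_estar ab) k_a k_b.
Qed.

Let sub_pre_c : {subset pre_c <= pre_c ++ suf_c} := mem_subseq (prefix_subseq _ _).
Let sub_suf_c : {subset suf_c <= pre_c ++ suf_c} := mem_subseq (suffix_subseq _ _).
Let sub_pre_r : {subset pre_r <= pre_r ++ suf_r} := mem_subseq (prefix_subseq _ _).
Let sub_suf_r : {subset suf_r <= pre_r ++ suf_r} := mem_subseq (suffix_subseq _ _).

Lemma closes_eleft (G : grid L n) :
  unmatched_closes (rows_letter (eleft (val r) G) a b) suf_c =
  unmatched_closes (rows_letter G a b) suf_c.
Proof. exact/eq_in_unmatched_closes/(sub_in1 sub_suf_c)/rows_letter_eleft. Qed.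

Lemma closes_estar (G : grid L n) :
  unmatched_closes (cols_letter (estar (val b) G) l r) suf_r =
  unmatched_closes (cols_letter G l r) suf_r.
Proof. exact/eq_in_unmatched_closes/(sub_in1 sub_suf_r)/cols_letter_estar. Qed.

Lemma down_moved_eleft (G : grid L n) c : c \notin [:: l; r] ->
  (c \in down_moved (eleft (val r) G) a b) = (c \in down_moved G a b).
Proof.
move=> c_out; rewrite /down_moved cols_window !mem_open_stack_out // closes_eleft.
have pops G' : window_pops (rows_letter G' a b l) (rows_letter G' a b r) =
               down_pops^~ (block_of G' a b l r) by [].
rewrite !pops block_eleft down_pops_left.
have agree := rows_letter_eleft G.
rewrite (eq_in_open_stack _ (sub_in1 sub_suf_c agree)).
by rewrite (eq_in_open_stack _ (sub_in1 sub_pre_c agree)).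
Qed.

Lemma left_moved_estar (G : grid L n) k : k \notin [:: b; a] ->
  (k \in left_moved (estar (val b) G) l r) = (k \in left_moved G l r).
Proof.
move=> k_out; rewrite /left_moved rows_window !mem_open_stack_out // closes_estar.
have pops G' : window_pops (cols_letter G' l r b) (cols_letter G' l r a) =
               left_pops^~ (block_of G' a b l r) by [].
rewrite !pops block_estar left_pops_down.
have agree := cols_letter_estar G.
rewrite (eq_in_open_stack _ (sub_in1 sub_suf_r agree)).
by rewrite (eq_in_open_stack _ (sub_in1 sub_pre_r agree)).
Qed.

Lemma estar_eleftC (G : grid L n) :
  estar (val b) (eleft (val r) G) = eleft (val r) (estar (val b) G).
Proof.
have block_eq : block_of (estar (val b) (eleft (val r) G)) a b l r =
                block_of (eleft (val r) (estar (val b) G)) a b l r.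
  rewrite block_estar closes_eleft block_eleft.
  by rewrite [RHS]block_eleft closes_estar block_estar block_down_leftC.
apply/ffunP => k; apply/setP => c.
have [k_in | k_out] := boolP (k \in [:: b; a]).
  have [c_in | c_out] := boolP (c \in [:: l; r]).
    move: block_eq k_in c_in; rewrite /block_of !inE.
    by case=> e_tl e_tr e_bl e_br /orP[]/eqP-> /orP[]/eqP->.
  have := c_out; rewrite !inE negb_or => /andP[/negPf c_l /negPf c_r].
  rewrite !(mem_estar ab) !(mem_eleft lr) c_l c_r.
  by rewrite (down_moved_eleft _ c_out) (mem_estar ab).
have := k_out; rewrite !inE negb_or => /andP[/negPf k_b /negPf k_a].
rewrite !(mem_eleft lr) !(mem_estar ab) k_a k_b.
by rewrite (left_moved_estar _ k_out) (mem_eleft lr).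
Qed.

End Commutation.

Unset Implicit Arguments. Set Strict Implicit. Set Printing Implicit Defensive.

Theorem lemma5p7 (L n : nat) (hL : 0 < L) (hn : 0 < n) (B : grid L n) (i j : nat) :
  1 <= i <= L - 1 -> 1 <= j <= n - 1 ->
  edown i (eleft j B) = eleft j (edown i B).
Proof.
move=> /andP[i_gt0 i_lt] /andP[j_gt0 j_lt].
have a_lt : i.-1 < L by lia. have b_lt : i < L by lia.
have l_lt : j.-1 < n by lia. have r_lt : j < n by lia.
pose a := Ordinal a_lt; pose b := Ordinal b_lt.
pose l := Ordinal l_lt; pose r := Ordinal r_lt.
have ab : val b = (val a).+1 by rewrite /= prednK.
have lr : val r = (val l).+1 by rewrite /= prednK.
have rev_ab : val (rev_ord a) = (val (rev_ord b)).+1 by rewrite /=; lia.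
have rows_window : map (@rev_ord L) (enum 'I_L) =
    map (@rev_ord L) (take (rev_ord b) (enum 'I_L)) ++ [:: b; a] ++
    map (@rev_ord L) (drop (rev_ord a).+1 (enum 'I_L)).
  by rewrite {1}(enum_window rev_ab) !map_cat /= !rev_ordK.
exact (estar_eleftC ab lr (enum_window lr) rows_window B).
Qed.
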